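(* Let $(Z_i)_{i\ge1}$ be i.i.d. real random variables with $P(Z_1>x)\sim c\,e^{-\alpha x}$ as $x\to\infty$, for constants $c,\alpha>0$. Then there exists $\delta>0$, depending only on the law of $Z_1$, such that for every countable family $(x_i)$ of real numbers for which $Y:=\sup_i(x_i+Z_i)<\infty$ a.s., one has $\mathrm{conc}(\mathrm{dist}(Y),\delta)\le1-\delta$.
   Context: For a random variable $Y$ and $\delta>0$, $\mathrm{conc}(\mathrm{dist}(Y),\delta)=\sup_{a\in\mathbb R}P(a\le Y\le a+\delta)$. *)

From HB Require Import structures.
From mathcomp Require Import all_boot all_order all_algebra.
From mathcomp Require Import all_classical all_reals all_analysis.
Set Implicit Arguments. Unset Strict Implicit. Unset Printing Implicit Defensive.
Import Order.TTheory GRing.Theory Num.Theory.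
Import numFieldNormedType.Exports.
Local Open Scope classical_set_scope.
Local Open Scope ring_scope.

Definition mutually_independent (d : measure_display) (T : measurableType d)
  (R : realType) (P : probability T R) (Z : nat -> T -> R) : Prop :=
  forall (s : seq nat) (B : nat -> set R),
    uniq s -> (forall i, measurable (B i)) ->
    P (\bigcap_(i in [set` s]) (Z i @^-1` B i)) =
    (\prod_(i <- s) P (Z i @^-1` B i))%E.

Definition identically_distributed (d : measure_display) (T : measurableType d)
  (R : realType) (P : probability T R) (Z : nat -> T -> R) : Prop :=
  forall (i : nat) (B : set R), measurable B ->
    P (Z i @^-1` B) = P (Z 0 @^-1` B).

Definition conc (d : measure_display) (T : measurableType d)
  (R : realType) (P : probability T R) (Y : T -> \bar R) (delta : R) : \bar R :=
  ereal_sup [set P [set t | ((a%:E <= Y t) && (Y t <= (a + delta)%:E))%E]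
            | a in [set: R]].

(* Write [q_i] for the probability that [Z_i] exceeds [a + delta - x_i].  If
   some [q_i >= delta], the window [a <= Y <= a + delta] forces
   [Z_i <= a + delta - x_i], an event of probability [1 - q_i <= 1 - delta].
   Otherwise every threshold [a + delta - x_i] lies far in the tail, where the
   exponential decay gives [P (Z_i > a - delta - x_i) <= K q_i].  If the [q_i]
   sum to at least [theta], independence bounds the window by
   [prod (1 - q_i) <= 1 / (1 + theta)]; if not, the window lies in the union of
   the events [Z_i > a - delta - x_i], of total probability at most [K theta]. *)

From HB Require Import structures.
From mathcomp Require Import all_boot all_order all_algebra.
From mathcomp Require Import all_classical all_reals all_analysis.
From mathcomp Require Import measurable_realfun ring lra.
Import Order.TTheory GRing.Theory Num.Theory.
Import numFieldNormedType.Exports.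
Local Open Scope classical_set_scope.
Local Open Scope ring_scope.

Lemma prod1B_mul_sum_le1 {R : realDomainType} {I : Type} (s : seq I) (q : I -> R) :
  (forall i, 0 <= q i <= 1) ->
  \prod_(i <- s) (1 - q i) * (1 + \sum_(i <- s) q i) <= 1.
Proof.
move=> q01.
suff [] : 0 <= \prod_(i <- s) (1 - q i) <= 1 /\
          \prod_(i <- s) (1 - q i) * (1 + \sum_(i <- s) q i) <= 1 by [].
elim: s => [|j s [/andP[p0 p1] IH]].
  by rewrite !big_nil ler01 lexx addr0 mulr1.
rewrite !big_cons; have /andP[q0 q1] := q01 j.
set p := \prod_(i <- s) _ in p0 p1 IH *; set S := \sum_(i <- s) _ in IH *.
by split; [apply/andP; split|]; nra.
Qed.

Lemma expR_tail_sandwich (R : realType) (G : R -> R) (c alpha : R) :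
  0 < c ->
  (G x / (c * expR (- (alpha * x)))) @[x --> +oo] --> (1 : R) ->
  exists x0 : R, forall y, x0 < y ->
    c / 2 * expR (- (alpha * y)) <= G y <= 2 * c * expR (- (alpha * y)).
Proof.
move=> c0 /cvgrPdist_lt /(_ 2^-1) [] // M [_ HM].
exists M => y My; have := HM _ My.
set E := expR _; have cE0 : 0 < c * E by rewrite mulr_gt0 ?expR_gt0.
rewrite ltr_distlC => /andP[lbG ubG].
have -> : G y = G y / (c * E) * (c * E) by rewrite divfK ?gt_eqF.
set r := G y / (c * E) in lbG ubG *.
by apply/andP; split; nra.
Qed.

(* The factor [e^(2 alpha)] pays for the shift [h <= 2], and 4 for the
   constants of the sandwich. *)
Lemma expR_tail_shift (R : realType) (G : R -> R) (c alpha x0 y h : R) :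
  0 < c -> 0 <= alpha -> 0 <= h <= 2 ->
  (forall y, x0 < y ->
    c / 2 * expR (- (alpha * y)) <= G y <= 2 * c * expR (- (alpha * y))) ->
  x0 < y - h -> G (y - h) <= 4 * expR (2 * alpha) * G y.
Proof.
move=> c0 a0 /andP[h0 h2] sandwich x0yh.
have x0y : x0 < y by lra.
have /andP[_ ubG] := sandwich _ x0yh; have /andP[lbG _] := sandwich _ x0y.
have shift : expR (- (alpha * (y - h))) = expR (- (alpha * y)) * expR (alpha * h).
  by rewrite -expRD; congr expR; ring.
rewrite shift in ubG.
have ah : expR (alpha * h) <= expR (2 * alpha) by rewrite ler_expR; nra.
have E0 := expR_gt0 (- (alpha * y)); have e0 := expR_gt0 (alpha * h).
set E := expR (- (alpha * y)) in lbG ubG E0 *.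
set e := expR (alpha * h) in ah ubG e0; set e2 := expR (2 * alpha) in ah *.
have cEe : c * E * e <= c * E * e2 by rewrite ler_pM2l ?mulr_gt0.
have e2G : e2 * (c / 2 * E) <= e2 * G y by rewrite ler_pM2l ?expR_gt0.
lra.
Qed.

Definition tail {d} {T : measurableType d} {R : realType}
  (P : probability T R) (X : T -> R) (y : R) : R := fine (P [set t | y < X t]).

Section tail.
Context {d} {T : measurableType d} {R : realType} {P : probability T R}.
Context {X : T -> R}.
Hypothesis mX : measurable_fun setT X.

Lemma preimage_gt y : [set t | y < X t] = X @^-1` `]y, +oo[.
Proof. by apply/seteqP; split => t /=; rewrite in_itv /= andbT. Qed.

Lemma preimage_le y : [set t | X t <= y] = X @^-1` `]-oo, y].
Proof. by apply/seteqP; split => t /=; rewrite in_itv. Qed.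

Lemma measurable_preimage B : measurable B -> measurable (X @^-1` B).
Proof. by move=> mB; rewrite -[_ @^-1` _]setTI; exact: mX. Qed.

Lemma measurable_gt y : measurable [set t | y < X t].
Proof. by rewrite preimage_gt; apply: measurable_preimage; exact: measurable_itv. Qed.

Lemma tailE y : P [set t | y < X t] = (tail P X y)%:E.
Proof. by rewrite fineK // fin_num_measure //; exact: measurable_gt. Qed.

Lemma tail_ge0 y : 0 <= tail P X y.
Proof. by rewrite fine_ge0. Qed.

Lemma tail_le1 y : tail P X y <= 1.
Proof. by rewrite -lee_fin -tailE; apply: probability_le1; exact: measurable_gt. Qed.

Lemma le_tail {y z} : y <= z -> tail P X z <= tail P X y.
Proof.
move=> yz; rewrite -lee_fin -!tailE; apply: le_measure; rewrite ?inE;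
  [exact: measurable_gt..|].
by move=> t /=; apply: le_lt_trans.
Qed.

Lemma tail_lt_gt {y z} : tail P X z < tail P X y -> y < z.
Proof. by apply: contraTT; rewrite -!leNgt; exact: le_tail. Qed.

Lemma probability_leE y : P [set t | X t <= y] = (1 - tail P X y)%:E.
Proof.
have -> : [set t | X t <= y] = ~` [set t | y < X t].
  by apply/seteqP; split => t /=; rewrite leNgt => /negP.
by rewrite probability_setC ?tailE //; exact: measurable_gt.
Qed.

End tail.

Lemma identically_distributed_tail {d} {T : measurableType d} {R : realType}
    {P : probability T R} {Z : nat -> T -> R} :
  identically_distributed P Z -> forall i y, tail P (Z i) y = tail P (Z 0) y.
Proof.
by move=> idZ i y; rewrite /tail !preimage_gt idZ //; exact: measurable_itv.
Qed.

Section window.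
Context {d} {T : measurableType d} {R : realType} {P : probability T R}.
Context {Z : nat -> T -> R}.
Hypothesis mZ : forall i, measurable_fun setT (Z i).
Hypothesis indep : mutually_independent P Z.
Hypothesis idZ : identically_distributed P Z.
Context {I : set nat} {x : nat -> R} {a delta : R}.

Let Y (t : T) : \bar R := ereal_sup [set (x i + Z i t)%:E | i in I].
Let window := [set t | ((a%:E <= Y t) && (Y t <= (a + delta)%:E))%E].
Let G := tail P (Z 0).

(* [Y] is the supremum of the sequence [x k + Z k] padded with [-oo] outside [I]. *)
Lemma measurable_sup_shifted : measurable_fun [set: T] (Y : T -> \bar R).
Proof.
pose f k t := if k \in I then (x k + Z k t)%:E else -oo%E.
have -> : Y = fun t => esups (f ^~ t) 0.
  apply/funext => t; apply/eqP; rewrite eq_le; apply/andP; split.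
    apply: ge_ereal_sup => _ [i Ii <-]; apply: ereal_sup_ubound.
    by exists i => //; rewrite /f mem_set.
  apply: ge_ereal_sup => _ [k _ <-]; rewrite /f; case: ifPn => [/set_mem Ik|_].
    by apply: ereal_sup_ubound; exists k.
  exact: leNye.
apply: measurable_fun_esups => k; rewrite /f; case: (k \in I).
  by apply: measurableT_comp => //; apply: measurable_funD.
exact: measurable_cst.
Qed.

Lemma measurable_window : measurable window.
Proof.
have -> : window = (setT `&` [set t | (a%:E <= Y t)%E]) `&`
                   (setT `&` [set t | (Y t <= (a + delta)%:E)%E]).
  by apply/seteqP; split => t /=; [case/andP|case=> [[_ ?] [_ ?]]; apply/andP].
have mY := measurable_sup_shifted.
by apply: measurableI; [apply: emeasurable_fun_c_infty|apply: emeasurable_fun_infty_c].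
Qed.

Lemma window_sub_le i : I i -> window `<=` [set t | Z i t <= a + delta - x i].
Proof.
move=> Ii t /andP[_ Ya] /=.
have : ((x i + Z i t)%:E <= Y t)%E by apply: ereal_sup_ubound; exists i.
by move=> /le_trans /(_ Ya); rewrite lee_fin -lerBrDl.
Qed.

Lemma window_le_1Btail {i} : I i -> (P window <= (1 - G (a + delta - x i))%:E)%E.
Proof.
move=> Ii; rewrite /G -(identically_distributed_tail idZ i).
rewrite -probability_leE //; apply: le_measure; rewrite ?inE.
- exact: measurable_window.
- by rewrite preimage_le; apply: measurable_preimage => //; exact: measurable_itv.
- exact: window_sub_le.
Qed.

Lemma window_le_prod n :
  (P window <= (\prod_(0 <= k < n | k \in I) (1 - G (a + delta - x k)))%:E)%E.
Proof.
pose B i := `]-oo, a + delta - x i]%classic.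
have := indep [seq k <- index_iota 0 n | k \in I] B
  (filter_uniq _ (iota_uniq 0 _)) (fun i => measurable_itv _).
rewrite -big_filter -prodEFin.
under eq_bigr => i _ do
  rewrite -preimage_le // probability_leE // (identically_distributed_tail idZ).
move=> <-; apply: le_measure; rewrite ?inE.
- exact: measurable_window.
- apply: bigcap_measurableType => k _.
  by apply: measurable_preimage => //; exact: measurable_itv.
- move=> t wt i; rewrite /= mem_filter => /andP[/set_mem Ii _].
  by rewrite /B /= in_itv /=; exact: window_sub_le.
Qed.

Lemma window_le_sum (b : R) : 0 < delta ->
  (forall n, \sum_(0 <= k < n | k \in I) G (a - delta - x k) <= b) ->
  (P window <= b%:E)%E.
Proof.
move=> delta0 sum_le.
pose B k := if k \in I then [set t | a - delta - x k < Z k t] else set0.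
have mB k : measurable (B k).
  by rewrite /B; case: ifP => _; [exact: measurable_gt|exact: measurable0].
have window_cover : window `<=` \bigcup_k B k.
  move=> t /andP[aY _].
  have : ((a - delta)%:E < Y t)%E by apply: lt_le_trans aY; rewrite lte_fin; lra.
  move=> /ereal_sup_gt [_ [i Ii <-]]; rewrite lte_fin => ltYi.
  by exists i => //; rewrite /B mem_set //=; lra.
apply: le_trans (measure_sigma_subadditive P mB measurable_window window_cover) _.
apply: lime_le; first exact: is_cvg_nneseries.
have PB k : P (B k) = if k \in I then (G (a - delta - x k))%:E else 0%E.
  rewrite /B /G; case: ifP => _; last exact: measure0.
  by rewrite tailE // (identically_distributed_tail idZ).
apply: nearW => n; rewrite (eq_bigr _ (fun k _ => PB k)).
by rewrite -big_mkcond sumEFin lee_fin.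
Qed.

Lemma window_le_max (theta K : R) : 0 < delta -> 0 < theta -> 0 <= K ->
  (forall i, I i -> G (a - delta - x i) <= K * G (a + delta - x i)) ->
  (P window <= (Num.max (1 + theta)^-1 (K * theta))%:E)%E.
Proof.
move=> delta0 theta0 K0 shift.
have [[n large]|small] := pselect
    (exists n, theta <= \sum_(0 <= k < n | k \in I) G (a + delta - x k)).
  apply: le_trans (window_le_prod n) _; rewrite lee_fin le_max; apply/orP; left.
  have tail01 k : 0 <= G (a + delta - x k) <= 1 by rewrite tail_ge0 tail_le1.
  have := prod1B_mul_sum_le1 [seq k <- index_iota 0 n | k \in I] _ tail01.
  rewrite !big_filter -[_^-1]div1r ler_pdivlMr ?addr_gt0 //.
  have : 0 <= \prod_(0 <= k < n | k \in I) (1 - G (a + delta - x k)).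
    by apply: prodr_ge0 => k _; rewrite subr_ge0 tail_le1.
  set p := \prod_(_ <= _ < _ | _) _; set S := \sum_(_ <= _ < _ | _) _ in large *.
  nra.
apply: le_trans (window_le_sum (K * theta) delta0 _) _; last first.
  by rewrite lee_fin le_max lexx orbT.
move=> n; apply: le_trans (_ : \sum_(0 <= k < n | k \in I)
    K * G (a + delta - x k) <= _); first by apply: ler_sum => k /set_mem; exact: shift.
rewrite -mulr_sumr ler_wpM2l // ltW // ltNge; apply/negP => large.
by apply: small; exists n.
Qed.

Lemma window_le_1Bdelta (theta K : R) : 0 < delta -> 0 < theta -> 0 <= K ->
  delta <= 1 - Num.max (1 + theta)^-1 (K * theta) ->
  (forall i, I i -> G (a + delta - x i) < delta ->
     G (a - delta - x i) <= K * G (a + delta - x i)) ->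
  (P window <= (1 - delta)%:E)%E.
Proof.
move=> delta0 theta0 K0 delta_le shift.
have [[i Ii large]|small] := pselect (exists2 i, I i & delta <= G (a + delta - x i)).
  by apply: le_trans (window_le_1Btail Ii) _; rewrite lee_fin lerB.
apply: le_trans (window_le_max theta K delta0 theta0 K0 _) _; last first.
  by rewrite lee_fin lerBrDl -lerBrDr.
move=> i Ii; apply: shift => //; rewrite ltNge; apply/negP => large.
by apply: small; exists i.
Qed.

End window.

Theorem lemma27 (d : measure_display) (T : measurableType d) (R : realType)
  (P : probability T R) (Z : nat -> T -> R) (c alpha : R) :
  (forall i, measurable_fun setT (Z i)) ->
  mutually_independent P Z ->
  identically_distributed P Z ->
  0 < c -> 0 < alpha ->
  (fine (P [set t | x < Z 0%N t]) / (c * expR (- (alpha * x))))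
    @[x --> +oo] --> (1 : R) ->
  exists delta : R, 0 < delta /\
    forall (I : set nat) (x : nat -> R),
      I !=set0 ->
      let Y := fun t => ereal_sup [set (x i + Z i t)%:E | i in I] in
      P [set t | Y t = +oo%E] = 0%E ->
      (conc P Y delta <= (1 - delta)%:E)%E.
Proof.
move=> mZ indep idZ c0 alpha0 tailZ.
have [x0 sandwich] := @expR_tail_sandwich _ (tail P (Z 0)) _ _ c0 tailZ.
set G := tail P (Z 0) in sandwich.
have g0 : 0 < G (x0 + 2).
  have x0_lt : x0 < x0 + 2 by rewrite ltrDl.
  have /andP[lbG _] := sandwich _ x0_lt.
  by apply: lt_le_trans lbG; rewrite mulr_gt0 ?divr_gt0 ?expR_gt0.
set K := 4 * expR (2 * alpha); set theta := (2 * K)^-1.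
have K0 : 0 < K by rewrite mulr_gt0 ?expR_gt0.
have theta0 : 0 < theta by rewrite invr_gt0 mulr_gt0.
have Ktheta : K * theta = 2^-1 by rewrite /theta invfM mulrCA divff ?mulr1 ?gt_eqF.
set bound := Num.max (1 + theta)^-1 (K * theta).
have bound_lt1 : bound < 1.
  by rewrite gt_max Ktheta !invf_lt1 ?addr_gt0 // ltrDl theta0 ltr1n.
set delta := Num.min (G (x0 + 2)) (1 - bound).
have delta0 : 0 < delta by rewrite lt_min g0 subr_gt0.
have delta1 : delta <= 1.
  have bound0 : 0 <= bound by rewrite le_max invr_ge0 ltW ?addr_gt0.
  by rewrite ge_min lerBlDr lerDl bound0 orbT.
(* Neither the nonemptiness of [I] nor the a.s. finiteness of [Y] is needed. *)
exists delta; split => // I x _ Y _; apply: ge_ereal_sup => _ [a _ <-].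
apply: (window_le_1Bdelta mZ indep idZ theta K delta0 theta0 (ltW K0)).
  by rewrite ge_min lexx orbT.
move=> i Ii small; have far : x0 + 2 < a + delta - x i.
  by apply: (tail_lt_gt (mZ 0)); apply: lt_le_trans small _; rewrite ge_min lexx.
have -> : a - delta - x i = a + delta - x i - 2 * delta by ring.
apply: expR_tail_shift c0 (ltW alpha0) _ sandwich _; last by lra.
by apply/andP; split; lra.
Qed.
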